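(* Let $\mathcal{M}$ be a metric space whose underlying set is $\omega$, and let $\mathcal{C}(\mathcal{M})$ be its metric completion. Suppose $\mathcal{C}(\mathcal{M})$ is a proper Polish metric space (every closed ball $\{y : d(x,y)\le r\}$ is compact). Then $\mathrm{SR}(\mathcal{C}(\mathcal{M})) \leq \omega_1^{\mathcal{M}} + 1$.
   Context: The language of metric spaces is $\mathscr{U} = \{\dot d_q, \dot d^q : q \in \mathbb{Q}^+\}$ with binary relation symbols, interpreted in a metric space by $\dot d_q(x,y) \Leftrightarrow d(x,y) < q$ and $\dot d^q(x,y) \Leftrightarrow d(x,y) > q$. For a structure $\mathcal{N}$ and tuples $\bar a=(a_0,\dots,a_{p-1})$, $\bar b=(b_0,\dots,b_{p-1})$ from $\mathcal{N}$ of equal length: $\bar a \sim_0 \bar b$ iff $a_i\mapsto b_i$ ($i<p$) is a partial $\mathscr{U}$-isomorphism; $\bar a \sim_{\alpha+1}\bar b$ iff for every $a\in\mathcal{N}$ there is $b\in\mathcal{N}$ with $\bar a a\sim_\alpha \bar b b$ and for every $b\in \mathcal{N}$ there is $a\in\mathcal{N}$ with $\bar a a\sim_\alpha\bar b b$; for limit $\beta$, $\bar a\sim_\beta\bar b$ iff $\bar a\sim_\alpha\bar b$ for all $\alpha<\beta$. $\mathrm{SR}(\bar a,\bar b)$ is the least ordinal $\mu$ with $\neg(\bar a\sim_\mu\bar b)$, or $\infty$ if none exists. $\mathrm{SR}(\bar a)=\sup\{\mathrm{SR}(\bar a,\bar b): \bar b\in {}^{|\bar a|}\mathcal{N},\ \mathrm{SR}(\bar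 a,\bar b)\neq\infty\}$ and $\mathrm{SR}(\mathcal{N})=\sup\{\mathrm{SR}(\bar a)+1:\bar a\in{}^{<\omega}\mathcal{N}\}$. The metric space $\mathcal{M}$ on $\omega$ is regarded as a real by coding the interpretations of all symbols of $\mathscr{U}$ in a fixed recursive way. For a real $x$, $\omega_1^x$ is the least ordinal $\alpha$ with $L_\alpha(x)\models\mathsf{KP}$ (equivalently, the least ordinal that is not the order type of a well-ordering of $\omega$ computable from $x$). *)

From Stdlib Require Import Reals QArith List Arith.
Open Scope R_scope.

Definition is_metric {X : Type} (d : X -> X -> R) : Prop :=
  (forall x y, 0 <= d x y) /\
  (forall x y, d x y = 0 <-> x = y) /\
  (forall x y, d x y = d y x) /\
  (forall x y z, d x z <= d x y + d y z).

Definition cauchy {X : Type} (d : X -> X -> R) (u : nat -> X) : Prop :=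
  forall e, 0 < e -> exists N, forall m n, (N <= m)%nat -> (N <= n)%nat -> d (u m) (u n) < e.

Definition converges_to {X : Type} (d : X -> X -> R) (u : nat -> X) (x : X) : Prop :=
  forall e, 0 < e -> exists N, forall n, (N <= n)%nat -> d (u n) x < e.

Definition complete_metric {X : Type} (d : X -> X -> R) : Prop :=
  forall u, cauchy d u -> exists x, converges_to d u x.

Definition metric_open {X : Type} (d : X -> X -> R) (U : X -> Prop) : Prop :=
  forall x, U x -> exists e, 0 < e /\ forall y, d x y < e -> U y.

Definition metric_compact {X : Type} (d : X -> X -> R) (K : X -> Prop) : Prop :=
  forall (I : Type) (U : I -> X -> Prop),
    (forall i, metric_open d (U i)) ->
    (forall x, K x -> exists i, U i x) ->
    exists l : list I, forall x, K x -> exists i, In i l /\ U i x.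

Definition closed_ball {X : Type} (d : X -> X -> R) (x : X) (r : R) : X -> Prop :=
  fun y => d x y <= r.

Definition proper_metric {X : Type} (d : X -> X -> R) : Prop :=
  forall x r, metric_compact d (closed_ball d x r).

Definition is_completion (d : nat -> nat -> R) {X : Type} (dX : X -> X -> R)
  (iota : nat -> X) : Prop :=
  is_metric dX /\ complete_metric dX /\
  (forall m n, dX (iota m) (iota n) = d m n) /\
  (forall x e, 0 < e -> exists n, dX x (iota n) < e).

Record WellOrder := {
  wo_car :> Type;
  wo_lt : wo_car -> wo_car -> Prop;
  wo_wf : well_founded wo_lt;
  wo_trans : forall x y z, wo_lt x y -> wo_lt y z -> wo_lt x z;
  wo_total : forall x y, wo_lt x y \/ x = y \/ wo_lt y x }.
(* An element w : W stands for the ordinal = order type of {v | v < w}. *)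

Definition wo_zero (W : WellOrder) (w : W) : Prop := forall v, ~ wo_lt W v w.
Definition wo_succ_of (W : WellOrder) (w v : W) : Prop :=
  wo_lt W v w /\ forall u, wo_lt W u w -> u = v \/ wo_lt W u v.
Definition wo_limit (W : WellOrder) (w : W) : Prop :=
  ~ wo_zero W w /\ forall v, ~ wo_succ_of W w v.

Definition partial_iso {X : Type} (dX : X -> X -> R) (a b : list X) : Prop :=
  length a = length b /\
  forall i j ai aj bi bj,
    nth_error a i = Some ai -> nth_error a j = Some aj ->
    nth_error b i = Some bi -> nth_error b j = Some bj ->
    (ai = aj <-> bi = bj) /\
    forall q : Q, (0 < q)%Q ->
      (dX ai aj < Q2R q <-> dX bi bj < Q2R q) /\
      (dX ai aj > Q2R q <-> dX bi bj > Q2R q).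

(* bf X dX W w a b  ==  a ~_w b  (w read as an ordinal), defined by the
   three clauses (zero / successor / limit); since W is well-founded
   this inductive definition is the transfinite recursion. *)
Inductive bf {X : Type} (dX : X -> X -> R) (W : WellOrder) : W -> list X -> list X -> Prop :=
| bf_zero w a b : wo_zero W w -> partial_iso dX a b -> bf dX W w a b
| bf_succ w v a b : wo_succ_of W w v ->
    (forall x, exists y, bf dX W v (a ++ x :: nil) (b ++ y :: nil)) ->
    (forall y, exists x, bf dX W v (a ++ x :: nil) (b ++ y :: nil)) ->
    bf dX W w a b
| bf_lim w a b : wo_limit W w -> (forall v, wo_lt W v w -> bf dX W v a b) -> bf dX W w a b.

(* SR(a,b) <> infinity : some ordinal mu has not (a ~_mu b) *)
Definition SR_pair_finite {X : Type} (dX : X -> X -> R) (a b : list X) : Prop :=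
  exists (W : WellOrder) (v : W), ~ bf dX W v a b.

(* SR(a,b) <= ord(w) : the least mu with not (a ~_mu b) is <= ord(w) *)
Definition SR_pair_le {X : Type} (dX : X -> X -> R) (a b : list X)
  (W : WellOrder) (w : W) : Prop :=
  exists v : W, (v = w \/ wo_lt W v w) /\ ~ bf dX W v a b.

(* SR(a) <= ord(w): sup over b of finite SR(a,b) *)
Definition SR_tuple_le {X : Type} (dX : X -> X -> R) (a : list X)
  (W : WellOrder) (w : W) : Prop :=
  forall b, length b = length a -> SR_pair_finite dX a b -> SR_pair_le dX a b W w.

(* SR(N) <= ord(w) : for every tuple a, SR(a) + 1 <= ord(w), i.e. SR(a) < ord(w) *)
Definition SR_struct_le {X : Type} (dX : X -> X -> R) (W : WellOrder) (w : W) : Prop :=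
  forall a : list X, exists u : W, wo_lt W u w /\ SR_tuple_le dX a W u.

Inductive prf : Type :=
| PZero | PSucc | PProj (i : nat) | POrac
| PComp (f : prf) (gs : list prf) | PRec (f g : prf) | PMu (f : prf).

Inductive eval (P : nat -> Prop) : prf -> list nat -> nat -> Prop :=
| ev_zero l : eval P PZero l 0
| ev_succ l : eval P PSucc l (S (nth 0 l 0%nat))
| ev_proj i l : eval P (PProj i) l (nth i l 0%nat)
| ev_orac1 l : P (nth 0 l 0%nat) -> eval P POrac l 1
| ev_orac0 l : ~ P (nth 0 l 0%nat) -> eval P POrac l 0
| ev_comp f gs l ys z : evalL P gs l ys -> eval P f ys z -> eval P (PComp f gs) l z
| ev_rec0 f g l z : eval P f l z -> eval P (PRec f g) (0%nat :: l) z
| ev_recS f g m l y z : eval P (PRec f g) (m :: l) y -> eval P g (m :: y :: l) z ->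
    eval P (PRec f g) (S m :: l) z
| ev_mu f l n : eval P f (n :: l) 0 ->
    (forall m, (m < n)%nat -> exists k, eval P f (m :: l) (S k)) -> eval P (PMu f) l n
with evalL (P : nat -> Prop) : list prf -> list nat -> list nat -> Prop :=
| evL_nil l : evalL P nil l nil
| evL_cons g gs l y ys : eval P g l y -> evalL P gs l ys -> evalL P (g :: gs) l (y :: ys).

Definition computable_rel_from (P : nat -> Prop) (R : nat -> nat -> Prop) : Prop :=
  exists e : prf, forall m n,
    (R m n -> eval P e (m :: n :: nil) 1) /\ (~ R m n -> eval P e (m :: n :: nil) 0).

(* R is a (non-strict) well-ordering of its field {n | R n n} ⊆ nat *)
Definition is_wellordering_nat (R : nat -> nat -> Prop) : Prop :=
  (forall n m, R n m -> R n n /\ R m m) /\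
  (forall n m, R n m -> R m n -> n = m) /\
  (forall n m k, R n m -> R m k -> R n k) /\
  (forall n m, R n n -> R m m -> R n m \/ R m n) /\
  well_founded (fun n m => R n m /\ n <> m).

Definition ordtype_eq (R : nat -> nat -> Prop) (W : WellOrder) (w : W) : Prop :=
  exists f : nat -> W,
    (forall n, R n n -> wo_lt W (f n) w) /\
    (forall v, wo_lt W v w -> exists n, R n n /\ f n = v) /\
    (forall n m, R n n -> R m m -> ((R n m /\ n <> m) <-> wo_lt W (f n) (f m))).

Definition realized_from (P : nat -> Prop) (W : WellOrder) (w : W) : Prop :=
  exists R, computable_rel_from P R /\ is_wellordering_nat R /\ ordtype_eq R W w.

Definition is_omega1CK (P : nat -> Prop) (W : WellOrder) (w : W) : Prop :=
  ~ realized_from P W w /\ forall v, wo_lt W v w -> realized_from P W v.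

Definition cpair (a b : nat) : nat := ((a + b) * (a + b + 1)) / 2 + b.

Definition posrat (a b : nat) : R := INR (S a) / INR (S b).

Definition code_metric (d : nat -> nat -> R) : nat -> Prop :=
  fun c => exists i a b m n,
    c = cpair i (cpair a (cpair b (cpair m n))) /\
    ((i = 0%nat /\ d m n < posrat a b) \/ (i = 1%nat /\ d m n > posrat a b)).

(* First, in a proper space the finite levels of the
   back-and-forth hierarchy already decide all of it: if [a ~_n b] for every
   finite [n], then for each point [x] the witnesses [y_n] with
   [a x ~_n b y_n] stay in a closed ball, so they have a cluster point [z], and
   since each [~_n] is a closed condition on tuples, [a x ~_n b z] for every
   [n].  Hence [a ~_alpha b] for all ordinals [alpha], i.e. SR(a,b) is finite
   whenever it is not infinite.  Second, [omega_1^M] exceeds every natural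
   number, finite well-orders being computable from any oracle; so every
   SR(a) is at most [omega_1^M], which is below [omega_1^M + 1]. *)

From Stdlib Require Import Reals QArith Qreals List Arith Lia Lra Classical IndefiniteDescription.
Open Scope R_scope.

Section WellOrders.
Variable W : WellOrder.

Lemma wo_irrefl (x : W) : ~ wo_lt W x x.
Proof. induction (wo_wf W x) as [x _ IH]. intro H. exact (IH x H H). Qed.

Lemma wo_least (P : W -> Prop) (x : W) :
  P x -> exists m, P m /\ forall u, P u -> m = u \/ wo_lt W m u.
Proof.
  induction (wo_wf W x) as [x _ IH]. intro Px.
  destruct (classic (exists u, wo_lt W u x /\ P u)) as [[u [Hu Pu]]|Hno].
  - exact (IH u Hu Pu).
  - exists x. split; [exact Px|]. intros u Pu.
    destruct (wo_total W x u) as [H|[H|H]]; auto. exfalso; eauto.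
Qed.

Lemma wo_zero_exists (w : W) : exists z, wo_zero W z /\ (z = w \/ wo_lt W z w).
Proof.
  destruct (wo_least (fun _ => True) w I) as [z [_ Hz]].
  exists z. split; [|exact (Hz w I)].
  intros u Hu. destruct (Hz u I) as [->|Hzu].
  - exact (wo_irrefl u Hu).
  - exact (wo_irrefl z (wo_trans W _ _ _ Hzu Hu)).
Qed.

Lemma wo_succ_exists (v w : W) :
  wo_lt W v w -> exists s, wo_succ_of W s v /\ (s = w \/ wo_lt W s w).
Proof.
  intro Hvw. destruct (wo_least (wo_lt W v) w Hvw) as [s [Hvs Hs]].
  exists s. split; [split; [exact Hvs|] | exact (Hs w Hvw)].
  intros u Hus. destruct (wo_total W u v) as [H|[H|H]]; auto.
  exfalso. destruct (Hs u H) as [->|Hsu].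
  - exact (wo_irrefl u Hus).
  - exact (wo_irrefl s (wo_trans W _ _ _ Hsu Hus)).
Qed.

Lemma wo_succ_of_unique (v u u' : W) : wo_succ_of W v u -> wo_succ_of W v u' -> u = u'.
Proof.
  intros [Huv Hu] [Hu'v Hu'].
  destruct (Hu u' Hu'v) as [E|Hlt]; [auto|].
  destruct (Hu' u Huv) as [E|Hlt']; [auto|].
  exfalso. exact (wo_irrefl u (wo_trans W _ _ _ Hlt' Hlt)).
Qed.

Lemma wo_cases (v : W) : wo_zero W v \/ (exists u, wo_succ_of W v u) \/ wo_limit W v.
Proof.
  destruct (classic (wo_zero W v)) as [Hz|Hnz]; [auto|].
  destruct (classic (exists u, wo_succ_of W v u)) as [Hs|Hns]; [auto|].
  right; right. split; [exact Hnz|]. intros u Hu. apply Hns. exists u. exact Hu.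
Qed.

Inductive wo_is_nat : W -> nat -> Prop :=
| wo_is_nat_0 v : wo_zero W v -> wo_is_nat v 0
| wo_is_nat_S v u n : wo_succ_of W v u -> wo_is_nat u n -> wo_is_nat v (S n).

Lemma wo_is_nat_enum v k : wo_is_nat v k ->
  exists f : nat -> W,
    (forall n, (n < k)%nat -> wo_lt W (f n) v) /\
    (forall u, wo_lt W u v -> exists n, (n < k)%nat /\ f n = u) /\
    (forall n m, (n < k)%nat -> (m < k)%nat -> ((n < m)%nat <-> wo_lt W (f n) (f m))).
Proof.
  induction 1 as [v Hz|v u k [Huv Hmax] _ [f [Hf_lt [Hf_onto Hf_mono]]]].
  - exists (fun _ => v). split; [|split]; intros; try lia. exfalso; eapply Hz; eauto.
  - exists (fun i => if Nat.eqb i k then u else f i). split; [|split].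
    + intros i Hi. destruct (Nat.eqb_spec i k); [exact Huv|].
      apply (wo_trans W _ u); auto. apply Hf_lt; lia.
    + intros t Ht. destruct (Hmax t Ht) as [->|Htu].
      * exists k. rewrite Nat.eqb_refl. split; auto.
      * destruct (Hf_onto t Htu) as [i [Hi Hfi]]. exists i.
        destruct (Nat.eqb_spec i k); [lia|auto].
    + intros i j Hi Hj.
      destruct (Nat.eqb_spec i k), (Nat.eqb_spec j k); subst.
      * split; [lia|]. intro H. destruct (wo_irrefl _ H).
      * split; [lia|]. intro H. destruct (wo_irrefl u (wo_trans W _ _ _ H (Hf_lt j ltac:(lia)))).
      * split; [intros _; apply Hf_lt; lia | lia].
      * apply Hf_mono; lia.
Qed.

End WellOrders.

Definition prf_pred : prf := PRec PZero (PProj 0).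
Definition prf_sub : prf := PRec (PProj 0) (PComp prf_pred (PProj 1 :: nil)).

Fixpoint prf_const (c : nat) : prf :=
  match c with O => PZero | S c => PComp PSucc (prf_const c :: nil) end.

(* On [m :: n :: _] this computes [1 - (m - n) - (S n - k)] (truncated
   subtraction), which is [1] if [m <= n < k] and [0] otherwise. *)
Definition prf_le_below (k : nat) : prf :=
  PComp prf_sub
    (PComp prf_sub (prf_const k :: PComp PSucc (PProj 1 :: nil) :: nil)
     :: PComp prf_sub (PComp prf_sub (PProj 1 :: PProj 0 :: nil) :: prf_const 1 :: nil)
     :: nil).

Section Programs.
Variable P : nat -> Prop.

Lemma eval_prf_pred x : eval P prf_pred (x :: nil) (Nat.pred x).
Proof.
  induction x as [|x IH].
  - apply ev_rec0. constructor.
  - eapply ev_recS; [exact IH | exact (ev_proj P 0 (x :: Nat.pred x :: nil))].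
Qed.

Lemma eval_prf_sub y x : eval P prf_sub (y :: x :: nil) (x - y)%nat.
Proof.
  induction y as [|y IH].
  - rewrite Nat.sub_0_r. apply ev_rec0. exact (ev_proj P 0 (x :: nil)).
  - eapply ev_recS; [exact IH|]. rewrite Nat.sub_succ_r.
    eapply ev_comp; [|apply eval_prf_pred].
    apply evL_cons; [exact (ev_proj P 1 (y :: (x - y)%nat :: x :: nil)) | apply evL_nil].
Qed.

Lemma eval_prf_const c l : eval P (prf_const c) l c.
Proof.
  induction c as [|c IH]; simpl.
  - constructor.
  - eapply ev_comp; [apply evL_cons; [exact IH | apply evL_nil] | exact (ev_succ P (c :: nil))].
Qed.

Lemma eval_prf_le_below k m n :
  eval P (prf_le_below k) (m :: n :: nil) ((1 - (m - n)) - (S n - k))%nat.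
Proof.
  eapply ev_comp; [|apply eval_prf_sub].
  apply evL_cons; [|apply evL_cons; [|apply evL_nil]].
  - eapply ev_comp; [|apply eval_prf_sub].
    apply evL_cons; [apply eval_prf_const|apply evL_cons; [|apply evL_nil]].
    eapply ev_comp; [|exact (ev_succ P (n :: nil))].
    apply evL_cons; [exact (ev_proj P 1 (m :: n :: nil)) | apply evL_nil].
  - eapply ev_comp; [|apply eval_prf_sub].
    apply evL_cons; [|apply evL_cons; [apply eval_prf_const | apply evL_nil]].
    eapply ev_comp; [|apply eval_prf_sub].
    apply evL_cons; [exact (ev_proj P 1 (m :: n :: nil))|].
    apply evL_cons; [exact (ev_proj P 0 (m :: n :: nil)) | apply evL_nil].
Qed.

Lemma computable_le_below k : computable_rel_from P (fun m n => (m <= n < k)%nat).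
Proof.
  exists (prf_le_below k). intros m n. split; intro H.
  - replace 1%nat with ((1 - (m - n)) - (S n - k))%nat by lia. apply eval_prf_le_below.
  - replace 0%nat with ((1 - (m - n)) - (S n - k))%nat by lia. apply eval_prf_le_below.
Qed.

End Programs.

Lemma wellordering_le_below k : is_wellordering_nat (fun m n => (m <= n < k)%nat).
Proof.
  split; [|split; [|split; [|split]]]; intros; try lia.
  apply (well_founded_lt_compat nat (fun x => x)). intros x y [? ?]. lia.
Qed.

Lemma wo_is_nat_realized (P : nat -> Prop) (W : WellOrder) v k :
  wo_is_nat W v k -> realized_from P W v.
Proof.
  intro Hk. destruct (wo_is_nat_enum W v k Hk) as [f [Hf_lt [Hf_onto Hf_mono]]].
  exists (fun m n => (m <= n < k)%nat).
  split; [apply computable_le_below | split; [apply wellordering_le_below|]].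
  exists f. split; [|split].
  - intros n Hn. apply Hf_lt; lia.
  - intros u Hu. destruct (Hf_onto u Hu) as [n [Hn Hfn]]. exists n. split; [lia | exact Hfn].
  - intros n m Hn Hm. rewrite <- Hf_mono by lia. lia.
Qed.

Lemma omega1CK_gt_nat (P : nat -> Prop) (W : WellOrder) (w : W) :
  is_omega1CK P W w -> forall n, exists v, wo_lt W v w /\ wo_is_nat W v n.
Proof.
  intros [Hw _] n. induction n as [|n [v [Hvw Hv]]].
  - destruct (wo_zero_exists W w) as [z [Hz [->|Hzw]]].
    + destruct (Hw (wo_is_nat_realized P W w 0 (wo_is_nat_0 W w Hz))).
    + exists z. split; [exact Hzw | constructor; exact Hz].
  - destruct (wo_succ_exists W v w Hvw) as [s [Hs [->|Hsw]]].
    + destruct (Hw (wo_is_nat_realized P W w (S n) (wo_is_nat_S W w v n Hs Hv))).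
    + exists s. split; [exact Hsw | econstructor; eauto].
Qed.

Lemma Q2R_dense_pos (r1 r2 : R) :
  0 <= r1 -> r1 < r2 -> exists q : Q, (0 < q)%Q /\ r1 < Q2R q < r2.
Proof.
  intros H0 H12.
  destruct (archimed (/ (r2 - r1))) as [HN _].
  assert (HN0 : 0 < IZR (up (/ (r2 - r1)))).
  { apply Rlt_trans with (/ (r2 - r1)); [apply Rinv_0_lt_compat; lra | exact HN]. }
  destruct (up (/ (r2 - r1))) as [|p|p] eqn:EN;
    [lra | | pose proof (Pos2Z.neg_is_neg p); apply lt_IZR in HN0; lia].
  destruct (archimed (r1 * IZR (Z.pos p))) as [HM1 HM2].
  set (M := up (r1 * IZR (Z.pos p))) in *.
  assert (HQ : Q2R (Qmake M p) = IZR M / IZR (Z.pos p)) by reflexivity.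
  assert (Hinv : / IZR (Z.pos p) < r2 - r1).
  { rewrite <- (Rinv_inv (r2 - r1)). apply Rinv_lt_contravar; [|exact HN].
    apply Rmult_lt_0_compat; [apply Rinv_0_lt_compat; lra | exact HN0]. }
  assert (Hlo : r1 < IZR M / IZR (Z.pos p)).
  { apply Rmult_lt_reg_r with (IZR (Z.pos p)); [exact HN0|].
    unfold Rdiv. rewrite Rmult_assoc, Rinv_l by lra. lra. }
  assert (Hhi : IZR M / IZR (Z.pos p) <= r1 + / IZR (Z.pos p)).
  { apply Rmult_le_reg_r with (IZR (Z.pos p)); [exact HN0|].
    unfold Rdiv. rewrite Rmult_assoc, Rinv_l, Rmult_plus_distr_r, Rinv_l by lra. lra. }
  exists (Qmake M p). split; [|rewrite HQ; lra].
  apply Rlt_Qlt. rewrite HQ. unfold Q2R at 1. simpl. lra.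
Qed.

Lemma inv_INR_S_bounds k : 0 < / INR (S k) <= 1.
Proof.
  split; [apply Rinv_0_lt_compat, lt_0_INR; lia|].
  rewrite <- Rinv_1. apply Rinv_le_contravar; [lra|]. rewrite S_INR. pose proof (pos_INR k). lra.
Qed.

Lemma nth_error_snoc_last {A : Type} (a : list A) x :
  nth_error (a ++ x :: nil) (length a) = Some x.
Proof. rewrite nth_error_app2, Nat.sub_diag by lia. reflexivity. Qed.

Lemma nth_error_snoc {A : Type} (a : list A) x i u :
  nth_error a i = Some u -> nth_error (a ++ x :: nil) i = Some u.
Proof. intro H. rewrite nth_error_app1; [exact H|]. apply nth_error_Some. congruence. Qed.

Section BackAndForth.
Context {X : Type} (dX : X -> X -> R).

Lemma bf_refl (W : WellOrder) (v : W) : forall a, bf dX W v a a.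
Proof.
  induction (wo_wf W v) as [v _ IH]. intro a.
  destruct (wo_cases W v) as [Hz|[[u Hu]|Hl]].
  - apply bf_zero; [exact Hz|]. split; [reflexivity|].
    intros i j ai aj bi bj H1 H2 H3 H4.
    rewrite H1 in H3. rewrite H2 in H4. injection H3 as <-. injection H4 as <-. tauto.
  - apply (bf_succ dX W v u); [exact Hu | |]; intro x; exists x; apply IH, Hu.
  - apply bf_lim; [exact Hl|]. intros u Hu. apply IH, Hu.
Qed.

Definition dist_eq (a b : list X) : Prop :=
  length a = length b /\
  forall i j ai aj bi bj,
    nth_error a i = Some ai -> nth_error a j = Some aj ->
    nth_error b i = Some bi -> nth_error b j = Some bj ->
    dX ai aj = dX bi bj.

(* [dist_bf n] is the paper's [~_n], with [~_0] read as equality of all mutual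
   distances; in a metric space the two agree by density of the rationals. *)
Fixpoint dist_bf (n : nat) (a b : list X) : Prop :=
  match n with
  | O => dist_eq a b
  | S n => (forall x, exists y, dist_bf n (a ++ x :: nil) (b ++ y :: nil)) /\
           (forall y, exists x, dist_bf n (a ++ x :: nil) (b ++ y :: nil))
  end.

Definition close (e : R) : list X -> list X -> Prop := Forall2 (fun u v => dX u v < e).

Definition dist_bf_adherent (n : nat) (a b : list X) : Prop :=
  forall e, 0 < e -> exists a' b', close e a a' /\ close e b b' /\ dist_bf n a' b'.

Lemma dist_eq_snoc_prefix a b x y :
  dist_eq (a ++ x :: nil) (b ++ y :: nil) -> dist_eq a b.
Proof.
  intros [Hl H]. rewrite !length_app in Hl. simpl in Hl. split; [lia|].
  intros i j ai aj bi bj H1 H2 H3 H4. apply (H i j); apply nth_error_snoc; assumption.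
Qed.

Lemma dist_eq_snoc_last a b x y i ai bi :
  dist_eq (a ++ x :: nil) (b ++ y :: nil) ->
  nth_error a i = Some ai -> nth_error b i = Some bi -> dX ai x = dX bi y.
Proof.
  intros [Hl H] Ha Hb. rewrite !length_app in Hl. simpl in Hl.
  apply (H i (length a)).
  - apply nth_error_snoc; exact Ha.
  - apply nth_error_snoc_last.
  - apply nth_error_snoc; exact Hb.
  - replace (length a) with (length b) by lia. apply nth_error_snoc_last.
Qed.

Lemma dist_bf_sym n : forall a b, dist_bf n a b -> dist_bf n b a.
Proof.
  induction n as [|n IH]; simpl.
  - intros a b [Hl H]. split; [auto|]. intros. symmetry. eauto.
  - intros a b [Hf Hb]. split.
    + intros x. destruct (Hb x) as [y Hy]. eauto.
    + intros y. destruct (Hf y) as [x Hx]. eauto.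
Qed.

Lemma close_weaken e e' a a' : e <= e' -> close e a a' -> close e' a a'.
Proof. intro Hee. apply Forall2_impl. intros u v. lra. Qed.

Lemma close_snoc e a a' u v :
  close e a a' -> dX u v < e -> close e (a ++ u :: nil) (a' ++ v :: nil).
Proof. intros Ha Huv. apply Forall2_app; [exact Ha | constructor; [exact Huv | constructor]]. Qed.

Lemma close_nth e a a' i u :
  close e a a' -> nth_error a i = Some u -> exists v, nth_error a' i = Some v /\ dX u v < e.
Proof.
  intro H. revert i. induction H as [|u0 v0 a a' Huv _ IH]; intros [|i] Hu; try discriminate.
  - injection Hu as <-. exists v0. auto.
  - exact (IH i Hu).
Qed.

Lemma dist_bf_adherent_sym n a b : dist_bf_adherent n a b -> dist_bf_adherent n b a.
Proof.
  intros H e He. destruct (H e He) as [a' [b' [Ha [Hb Hab]]]].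
  exists b', a'. split; [exact Hb | split; [exact Ha | apply dist_bf_sym; exact Hab]].
Qed.

Section Inhabited.
(* Without a point of [X], [dist_bf (S n)] would hold vacuously. *)
Variable x0 : X.

Lemma dist_bf_dist_eq n : forall a b, dist_bf n a b -> dist_eq a b.
Proof.
  induction n as [|n IH]; simpl; [auto|]. intros a b [Hf _].
  destruct (Hf x0) as [y Hy]. exact (dist_eq_snoc_prefix a b x0 y (IH _ _ Hy)).
Qed.

Lemma dist_bf_S n : forall a b, dist_bf (S n) a b -> dist_bf n a b.
Proof.
  induction n as [|n IH].
  - exact (dist_bf_dist_eq 1).
  - intros a b [Hf Hb]. split.
    + intros x. destruct (Hf x) as [y Hy]. eauto.
    + intros y. destruct (Hb y) as [x Hx]. eauto.
Qed.

Lemma dist_bf_le m n a b : (m <= n)%nat -> dist_bf n a b -> dist_bf m a b.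
Proof. induction 1; auto using dist_bf_S. Qed.

Lemma dist_bf_adherent_length n a b : dist_bf_adherent n a b -> length a = length b.
Proof.
  intro H. destruct (H 1 ltac:(lra)) as [a' [b' [Ha [Hb Hab]]]].
  apply Forall2_length in Ha, Hb.
  destruct (dist_bf_dist_eq n a' b' Hab) as [Hl _]. congruence.
Qed.

End Inhabited.

Section MetricSpace.
Hypothesis Hm : is_metric dX.

Lemma metric_self x : dX x x = 0.
Proof. apply Hm. reflexivity. Qed.

Lemma metric_sym x y : dX x y = dX y x.
Proof. apply Hm. Qed.

Lemma metric_triangle x y z : dX x z <= dX x y + dX y z.
Proof. apply Hm. Qed.

Lemma partial_iso_dist_eq a b : partial_iso dX a b -> dist_eq a b.
Proof.
  intros [Hl H]. split; [exact Hl|]. intros i j ai aj bi bj H1 H2 H3 H4.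
  destruct (H i j ai aj bi bj H1 H2 H3 H4) as [_ Hq].
  destruct Hm as [Hpos _].
  destruct (Rtotal_order (dX ai aj) (dX bi bj)) as [Hlt|[Heq|Hgt]]; [exfalso | exact Heq | exfalso].
  - destruct (Q2R_dense_pos _ _ (Hpos ai aj) Hlt) as [q [Hq0 [Hq1 Hq2]]].
    apply (proj1 (Hq q Hq0)) in Hq1. lra.
  - destruct (Q2R_dense_pos _ _ (Hpos bi bj) Hgt) as [q [Hq0 [Hq1 Hq2]]].
    apply (proj1 (Hq q Hq0)) in Hq1. lra.
Qed.

Lemma dist_eq_partial_iso a b : dist_eq a b -> partial_iso dX a b.
Proof.
  intros [Hl H]. split; [exact Hl|]. intros i j ai aj bi bj H1 H2 H3 H4.
  pose proof (H i j ai aj bi bj H1 H2 H3 H4) as E.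
  destruct Hm as [_ [Hz _]]. split.
  - rewrite <- (Hz ai aj), <- (Hz bi bj), E. tauto.
  - intros q _. rewrite E. tauto.
Qed.

Lemma close_refl e a : 0 < e -> close e a a.
Proof. intro He. induction a; constructor; [rewrite metric_self; exact He | assumption]. Qed.

Lemma Rabs_dist_sub_le u v u' v' : Rabs (dX u v - dX u' v') <= dX u u' + dX v v'.
Proof.
  apply Rabs_le.
  pose proof (metric_triangle u u' v). pose proof (metric_triangle u' v' v).
  pose proof (metric_triangle u' u v'). pose proof (metric_triangle u v v').
  rewrite (metric_sym u' u), (metric_sym v' v) in *. lra.
Qed.

Lemma dist_eq_closed a b :
  (forall e, 0 < e -> exists a' b', close e a a' /\ close e b b' /\ dist_eq a' b') ->
  dist_eq a b.
Proof.
  intro H. destruct (H 1 ltac:(lra)) as [a1 [b1 [Ha1 [Hb1 [Hl1 _]]]]].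
  apply Forall2_length in Ha1, Hb1. split; [congruence|].
  intros i j ai aj bi bj Hai Haj Hbi Hbj. apply cond_eq. intros e He.
  destruct (H (e / 4) ltac:(lra)) as [a' [b' [Ha [Hb [_ Hd]]]]].
  destruct (close_nth _ _ _ _ _ Ha Hai) as [ai' [Hai' Dai]].
  destruct (close_nth _ _ _ _ _ Ha Haj) as [aj' [Haj' Daj]].
  destruct (close_nth _ _ _ _ _ Hb Hbi) as [bi' [Hbi' Dbi]].
  destruct (close_nth _ _ _ _ _ Hb Hbj) as [bj' [Hbj' Dbj]].
  pose proof (Hd i j ai' aj' bi' bj' Hai' Haj' Hbi' Hbj') as E.
  replace (dX ai aj - dX bi bj)
    with ((dX ai aj - dX ai' aj') + (dX bi' bj' - dX bi bj)) by (rewrite E; ring).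
  pose proof (Rabs_triang (dX ai aj - dX ai' aj') (dX bi' bj' - dX bi bj)).
  pose proof (Rabs_dist_sub_le ai aj ai' aj'). pose proof (Rabs_dist_sub_le bi' bj' bi bj).
  rewrite (metric_sym bi' bi), (metric_sym bj' bj) in *. lra.
Qed.

Lemma bf_wo_is_nat_dist_bf (W : WellOrder) v n :
  wo_is_nat W v n -> forall a b, bf dX W v a b -> dist_bf n a b.
Proof.
  induction 1 as [v Hz|v u n Hu _ IH]; intros a b Hbf;
    inversion Hbf as [? ? ? Hz' Hiso|? u' ? ? Hu' Hf Hb|? ? ? [Hnz Hns]]; subst.
  - exact (partial_iso_dist_eq a b Hiso).
  - destruct (Hz u' (proj1 Hu')).
  - destruct (Hnz Hz).
  - destruct (Hz' u (proj1 Hu)).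
  - rewrite <- (wo_succ_of_unique W v u u' Hu Hu') in Hf, Hb. split.
    + intros x. destruct (Hf x) as [y Hy]. exists y. exact (IH _ _ Hy).
    + intros y. destruct (Hb y) as [x Hx]. exists x. exact (IH _ _ Hx).
  - destruct (Hns u Hu).
Qed.

Definition cluster_point (y : nat -> X) (z : X) : Prop :=
  forall e, 0 < e -> forall N, exists k, (N <= k)%nat /\ dX (y k) z < e.

(* Otherwise every point of [K] has a ball avoided by a tail of [y]; finitely
   many such balls cover [K], yet they all miss [y M] for [M] past all tails. *)
Lemma compact_cluster_point (K : X -> Prop) (y : nat -> X) :
  metric_compact dX K -> (forall k, K (y k)) -> exists z, cluster_point y z.
Proof.
  intros HK Hy. apply NNPP. intro Hno.
  set (U := fun (i : X * R * nat) (p : X) =>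
    (forall k, (snd i <= k)%nat -> snd (fst i) <= dX (y k) (fst (fst i))) /\
    dX (fst (fst i)) p < snd (fst i)).
  destruct (HK _ U) as [l Hl].
  - intros [[z e] N] p [Hc Hp]. simpl in *. exists (e - dX z p). split; [lra|].
    intros q Hq. split; [exact Hc|]. simpl. pose proof (metric_triangle z p q). lra.
  - intros p _.
    destruct (classic (exists e N, 0 < e /\ forall k, (N <= k)%nat -> e <= dX (y k) p))
      as [[e [N [He Hk]]]|Hn].
    + exists (p, e, N). split; [exact Hk|]. simpl. rewrite metric_self. exact He.
    + exfalso. apply Hno. exists p. intros e He N. apply NNPP. intro Hk.
      apply Hn. exists e, N. split; [exact He|]. intros k Hk'. apply Rnot_lt_le. intro Hlt.
      apply Hk. exists k. auto.
  - set (M := fold_right (fun i acc => Nat.max (snd i) acc) 0%nat l).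
    assert (HM : forall i, In i l -> (snd i <= M)%nat).
    { unfold M. clear. induction l as [|j l IH]; simpl; [tauto|].
      intros i [->|Hi]; [lia|]. specialize (IH i Hi). lia. }
    destruct (Hl (y M) (Hy M)) as [[[z e] N] [Hin [Hc Hp]]]. simpl in *.
    specialize (Hc M (HM _ Hin)). simpl in Hc. rewrite metric_sym in Hp. lra.
Qed.

Section ProperSpace.
Hypothesis Hproper : proper_metric dX.
Variable x0 : X.

Lemma proper_cluster_point (c : X) (r : R) (y : nat -> X) :
  (forall k, dX c (y k) <= r) -> exists z, cluster_point y z.
Proof. apply (compact_cluster_point (closed_ball dX c r)), Hproper. Qed.

Lemma dist_bf_adherent_forth m a0 a b :
  dist_bf_adherent (S m) (a0 :: a) b ->
  forall x, exists z, dist_bf_adherent m ((a0 :: a) ++ x :: nil) (b ++ z :: nil).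
Proof.
  intros H x. destruct b as [|b0 b]; [apply (dist_bf_adherent_length x0) in H; discriminate|].
  assert (Hex : forall k, exists y a' b', close (/ INR (S k)) (a0 :: a) a' /\
            close (/ INR (S k)) (b0 :: b) b' /\ dist_bf m (a' ++ x :: nil) (b' ++ y :: nil)).
  { intro k. destruct (H _ (proj1 (inv_INR_S_bounds k))) as [a' [b' [Ha [Hb [Hf _]]]]].
    destruct (Hf x) as [y Hy]. exists y, a', b'. auto. }
  destruct (functional_choice _ Hex) as [y Hy].
  assert (Hbound : forall k, dX b0 (y k) <= dX a0 x + 2).
  { intro k. destruct (Hy k) as [a' [b' [Ha [Hb Hk]]]].
    destruct (close_nth _ _ _ 0 a0 Ha eq_refl) as [a0' [Ha0' Da]].
    destruct (close_nth _ _ _ 0 b0 Hb eq_refl) as [b0' [Hb0' Db]].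
    pose proof (dist_eq_snoc_last _ _ _ _ _ _ _ (dist_bf_dist_eq x0 m _ _ Hk) Ha0' Hb0').
    pose proof (inv_INR_S_bounds k).
    pose proof (metric_triangle b0 b0' (y k)). pose proof (metric_triangle a0' a0 x).
    rewrite (metric_sym a0' a0) in *. lra. }
  destruct (proper_cluster_point _ _ _ Hbound) as [z Hz].
  exists z. intros e He.
  destruct (archimed_cor1 (e / 2) ltac:(lra)) as [N [HN HN0]].
  destruct (Hz (e / 2) ltac:(lra) N) as [k [Hk Dk]].
  destruct (Hy k) as [a' [b' [Ha [Hb Hab]]]].
  assert (Hek : / INR (S k) <= e).
  { enough (/ INR (S k) <= / INR N) by lra.
    apply Rinv_le_contravar; [apply lt_0_INR; exact HN0 | apply le_INR; lia]. }
  exists (a' ++ x :: nil), (b' ++ y k :: nil). split; [|split; [|exact Hab]].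
  - apply close_snoc; [exact (close_weaken _ _ _ _ Hek Ha)|]. rewrite metric_self. exact He.
  - apply close_snoc; [exact (close_weaken _ _ _ _ Hek Hb)|]. rewrite metric_sym. lra.
Qed.

Lemma dist_bf_closed m : forall a0 a b, dist_bf_adherent m (a0 :: a) b -> dist_bf m (a0 :: a) b.
Proof.
  induction m as [|m IH]; intros a0 a b H.
  - apply dist_eq_closed. intros e He. destruct (H e He) as [a' [b' Hab]]. eauto.
  - split.
    + intros x. destruct (dist_bf_adherent_forth m a0 a b H x) as [z Hz]. exists z. exact (IH _ _ _ Hz).
    + intros y. destruct b as [|b0 b]; [apply (dist_bf_adherent_length x0) in H; discriminate|].
      destruct (dist_bf_adherent_forth m b0 b (a0 :: a) (dist_bf_adherent_sym _ _ _ H) y) as [x Hx].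
      exists x. apply dist_bf_sym. exact (IH _ _ _ Hx).
Qed.

Lemma dist_bf_extend a0 a b :
  (forall n, dist_bf n (a0 :: a) b) ->
  forall x, exists z, forall n, dist_bf n ((a0 :: a) ++ x :: nil) (b ++ z :: nil).
Proof.
  intros H x. destruct b as [|b0 b].
  { destruct (dist_bf_dist_eq x0 0 _ _ (H 0%nat)) as [Hl _]. discriminate. }
  assert (Hex : forall n, exists y, dist_bf n ((a0 :: a) ++ x :: nil) ((b0 :: b) ++ y :: nil))
    by (intro n; exact (proj1 (H (S n)) x)).
  destruct (functional_choice _ Hex) as [y Hy].
  assert (Hbound : forall k, dX b0 (y k) <= dX a0 x).
  { intro k. right. symmetry.
    exact (dist_eq_snoc_last (a0 :: a) (b0 :: b) _ _ 0 _ _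
             (dist_bf_dist_eq x0 k _ _ (Hy k)) eq_refl eq_refl). }
  destruct (proper_cluster_point _ _ _ Hbound) as [z Hz].
  exists z. intro n. apply dist_bf_closed. intros e He.
  destruct (Hz e He n) as [k [Hnk Dk]].
  exists ((a0 :: a) ++ x :: nil), ((b0 :: b) ++ y k :: nil).
  split; [apply close_refl, He | split].
  - apply close_snoc; [apply close_refl, He|]. rewrite metric_sym. exact Dk.
  - exact (dist_bf_le x0 n k _ _ Hnk (Hy k)).
Qed.

Lemma dist_bf_all_bf (W : WellOrder) (v : W) :
  forall a b, (forall n, dist_bf n a b) -> bf dX W v a b.
Proof.
  induction (wo_wf W v) as [v _ IH]. intros a b H.
  pose proof (dist_bf_dist_eq x0 0 _ _ (H 0%nat)) as [Hl _].
  destruct a as [|a0 a], b as [|b0 b]; try discriminate; [apply bf_refl|].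
  destruct (wo_cases W v) as [Hz|[[u Hu]|Hlim]].
  - apply bf_zero; [exact Hz|]. apply dist_eq_partial_iso. exact (H 0%nat).
  - apply (bf_succ dX W v u); [exact Hu| |].
    + intros x. destruct (dist_bf_extend a0 a (b0 :: b) H x) as [y Hy].
      exists y. apply IH; [apply Hu | exact Hy].
    + intros y.
      destruct (dist_bf_extend b0 b (a0 :: a) (fun n => dist_bf_sym n _ _ (H n)) y) as [x Hx].
      exists x. apply IH; [apply Hu|]. intro n. apply dist_bf_sym, Hx.
  - apply bf_lim; [exact Hlim|]. intros u Hu. apply IH; [exact Hu | exact H].
Qed.

End ProperSpace.
End MetricSpace.
End BackAndForth.

Theorem theorem6p3
  (d : nat -> nat -> R) (Hd : is_metric d)
  (X : Type) (dX : X -> X -> R) (iota : nat -> X)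
  (Hcompl : is_completion d dX iota)
  (Hproper : proper_metric dX) :
  forall (W : WellOrder) (w w' : W),
    is_omega1CK (code_metric d) W w ->
    wo_succ_of W w' w ->
    SR_struct_le dX W w'.
Proof.
  intros W w w' Hom Hsucc a.
  destruct Hcompl as [Hm _].
  exists w. split; [exact (proj1 Hsucc)|].
  intros b _ [W' [v' Hnot]].
  assert (Hfin : exists n, ~ dist_bf dX n a b).
  { apply not_all_ex_not. intro Hall. apply Hnot.
    exact (dist_bf_all_bf dX Hm Hproper (iota 0%nat) W' v' a b Hall). }
  destruct Hfin as [n Hn].
  destruct (omega1CK_gt_nat _ W w Hom n) as [v [Hvw Hv]].
  exists v. split; [right; exact Hvw|]. intro Hbf.
  exact (Hn (bf_wo_is_nat_dist_bf dX Hm W v n Hv a b Hbf)).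
Qed.
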